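(* The canonical structure $\mathbb{M}=(\mathbb{P},V)$ is a polarity-based (conceptual) $\mathbf{A}$-model; that is, for every atomic proposition $p\in\mathsf{Prop}$, the pair $V(p)=([\![p]\!],(\![p]\!))$ is a formal $\mathbf{A}$-concept of $\mathbb{P}$: $[\![p]\!]^{\uparrow}=(\![p]\!)$ and $[\![p]\!]=(\![p]\!)^{\downarrow}$.
   Context: Let $\mathbf{A}=(D,1,0,\vee,\wedge,\otimes,\to)$ be a complete, frame-distributive and dually frame-distributive, commutative and associative residuated lattice with $1\to\alpha=\alpha$ for all $\alpha$. Let $\mathcal{L}$ be the language $\varphi::=\bot\mid\top\mid p\mid\varphi\wedge\varphi\mid\varphi\vee\varphi\mid\Box\varphi\mid\Diamond\varphi$ and $\mathbf{L}$ the basic normal non-distributive modal logic (lattice axioms, $\top\vdash\Box\top$, $\Box p\wedge\Box q\vdash\Box(p\wedge q)$, $\Diamond\bot\vdash\bot$, $\Diamond(p\vee q)\vdash\Diamond p\vee\Diamond q$, closed under cut, substitution, the $\wedge$/$\vee$ rules and monotonicity of $\Box,\Diamond$). Let $\mathbf{Fm}$ be its Lindenbaum–Tarski algebra (formulas identified with their classes). A proper $\mathbf{A}$-filter is a map $f:\mathbf{Fm}\to\mathbf{A}$ with $f(\top)=1$, $f(\bot)=0$, $f(a\wedge b)=f(a)\wedge f(b)$; a proper $\mathbf{A}$-ideal is $i:\mathbf{Fm}\to\mathbf{A}$ with $i(\bot)=1$, $i(\top)=0$, $i(a\vee b)=i(a)\wedge i(b)$. $\mathsf{F}_{\mathbf{A}}(\mathbf{Fm})$,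 $\mathsf{I}_{\mathbf{A}}(\mathbf{Fm})$ are the sets of these. The canonical frame is $\mathbb{P}=(\mathsf{F}_{\mathbf{A}}(\mathbf{Fm}),\mathsf{I}_{\mathbf{A}}(\mathbf{Fm}),I,R_\Diamond,R_\Box)$ with $I(f,i)=\bigvee_{\phi}(f(\phi)\otimes i(\phi))$, $R_\Diamond(i,f)=\bigvee_\phi(f(\phi)\otimes i(\Diamond\phi))$, $R_\Box(f,i)=\bigvee_\phi(f(\Box\phi)\otimes i(\phi))$. For $\mathbf{A}$-subsets, $g^{\uparrow}(i)=\bigwedge_{f}(g(f)\to I(f,i))$ and $u^{\downarrow}(f)=\bigwedge_i(u(i)\to I(f,i))$. The canonical valuation assigns to each $p$ the pair $V(p)=([\![p]\!],(\![p]\!))$ with $[\![p]\!](f)=f(p)$ for $f\in\mathsf{F}_{\mathbf{A}}(\mathbf{Fm})$ and $(\![p]\!)(i)=i(p)$ for $i\in\mathsf{I}_{\mathbf{A}}(\mathbf{Fm})$; here $[\![\cdot]\!]$ denotes the extension (membership) component and $(\![\cdot]\!)$ the intension (description) component of a concept. *)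

Set Implicit Arguments.
Unset Strict Implicit.

Record CRL := {
  car :> Type;
  le : car -> car -> Prop;
  one : car;
  zero : car;
  join : car -> car -> car;
  meet : car -> car -> car;
  tens : car -> car -> car;
  impl : car -> car -> car;
  sup : (car -> Prop) -> car;
  inf : (car -> Prop) -> car;
  le_refl : forall a, le a a;
  le_trans : forall a b c, le a b -> le b c -> le a c;
  le_antisym : forall a b, le a b -> le b a -> a = b;
  zero_bot : forall a, le zero a;
  one_top : forall a, le a one;
  join_ubl : forall a b, le a (join a b);
  join_ubr : forall a b, le b (join a b);
  join_least : forall a b c, le a c -> le b c -> le (join a b) c;
  meet_lbl : forall a b, le (meet a b) a;
  meet_lbr : forall a b, le (meet a b) b;
  meet_greatest : forall a b c, le c a -> le c b -> le c (meet a b);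
  sup_ub : forall (S : car -> Prop) a, S a -> le a (sup S);
  sup_least : forall (S : car -> Prop) b, (forall a, S a -> le a b) -> le (sup S) b;
  inf_lb : forall (S : car -> Prop) a, S a -> le (inf S) a;
  inf_greatest : forall (S : car -> Prop) b, (forall a, S a -> le b a) -> le b (inf S);
  frame_distr : forall a (S : car -> Prop),
      meet a (sup S) = sup (fun x => exists s, S s /\ x = meet a s);
  dual_frame_distr : forall a (S : car -> Prop),
      join a (inf S) = inf (fun x => exists s, S s /\ x = join a s);
  tens_comm : forall a b, tens a b = tens b a;
  tens_assoc : forall a b c, tens a (tens b c) = tens (tens a b) c;
  residuation : forall a b c, le (tens a b) c <-> le b (impl a c);
  one_impl : forall a, impl one a = a
}.

Arguments le {_}.
Arguments one {_}.
Arguments zero {_}.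
Arguments join {_}.
Arguments meet {_}.
Arguments tens {_}.
Arguments impl {_}.
Arguments sup {_}.
Arguments inf {_}.

Definition bigsup (L : CRL) (I : Type) (F : I -> L) : L :=
  sup (fun x => exists i, F i = x).
Definition biginf (L : CRL) (I : Type) (F : I -> L) : L :=
  inf (fun x => exists i, F i = x).

Inductive fm (Atom : Type) : Type :=
| FBot : fm Atom
| FTop : fm Atom
| FVar : Atom -> fm Atom
| FAnd : fm Atom -> fm Atom -> fm Atom
| FOr : fm Atom -> fm Atom -> fm Atom
| FBox : fm Atom -> fm Atom
| FDia : fm Atom -> fm Atom.

Arguments FBot {Atom}.
Arguments FTop {Atom}.

Fixpoint fsubst (Atom : Type) (s : Atom -> fm Atom) (phi : fm Atom) : fm Atom :=
  match phi with
  | FBot => FBot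
  | FTop => FTop
  | FVar a => s a
  | FAnd x y => FAnd (fsubst s x) (fsubst s y)
  | FOr x y => FOr (fsubst s x) (fsubst s y)
  | FBox x => FBox (fsubst s x)
  | FDia x => FDia (fsubst s x)
  end.

Inductive der (Atom : Type) : fm Atom -> fm Atom -> Prop :=
| d_id : forall p, der p p
| d_bot : forall p, der FBot p
| d_top : forall p, der p FTop
| d_andl : forall p q, der (FAnd p q) p
| d_andr : forall p q, der (FAnd p q) q
| d_orl : forall p q, der p (FOr p q)
| d_orr : forall p q, der q (FOr p q)
| d_boxtop : der FTop (FBox FTop)
| d_boxand : forall p q, der (FAnd (FBox p) (FBox q)) (FBox (FAnd p q))
| d_diabot : der (FDia FBot) FBot
| d_diaor : forall p q, der (FDia (FOr p q)) (FOr (FDia p) (FDia q))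
| d_cut : forall p q r, der p q -> der q r -> der p r
| d_subst : forall (s : Atom -> fm Atom) p q, der p q -> der (fsubst s p) (fsubst s q)
| d_andI : forall p q r, der p q -> der p r -> der p (FAnd q r)
| d_orE : forall p q r, der p r -> der q r -> der (FOr p q) r
| d_boxmon : forall p q, der p q -> der (FBox p) (FBox q)
| d_diamon : forall p q, der p q -> der (FDia p) (FDia q).

(* interderivability: identification in the Lindenbaum-Tarski algebra *)
Definition eqv (Atom : Type) (p q : fm Atom) : Prop := der p q /\ der q p.

(* A map Fm -> A from the Lindenbaum-Tarski algebra is represented as a *)
(* map on formulas that is constant on interderivability classes.       *)
Definition respects (L : CRL) (Atom : Type) (f : fm Atom -> L) : Prop :=
  forall p q, eqv p q -> f p = f q.

Definition is_filter (L : CRL) (Atom : Type) (f : fm Atom -> L) : Prop :=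
  respects f /\ f FTop = one /\ f FBot = zero /\
  (forall a b, f (FAnd a b) = meet (f a) (f b)).

Definition is_ideal (L : CRL) (Atom : Type) (i : fm Atom -> L) : Prop :=
  respects i /\ i FBot = one /\ i FTop = zero /\
  (forall a b, i (FOr a b) = meet (i a) (i b)).

Record filt (L : CRL) (Atom : Type) := Filt {
  fval :> fm Atom -> L;
  fval_filter : is_filter fval }.

Record idl (L : CRL) (Atom : Type) := Idl {
  ival :> fm Atom -> L;
  ival_ideal : is_ideal ival }.

Definition cI (L : CRL) (Atom : Type) (f : filt L Atom) (i : idl L Atom) : L :=
  bigsup (fun phi : fm Atom => tens (f phi) (i phi)).

Definition cRdia (L : CRL) (Atom : Type) (i : idl L Atom) (f : filt L Atom) : L :=
  bigsup (fun phi : fm Atom => tens (f phi) (i (FDia phi))).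

Definition cRbox (L : CRL) (Atom : Type) (f : filt L Atom) (i : idl L Atom) : L :=
  bigsup (fun phi : fm Atom => tens (f (FBox phi)) (i phi)).

Definition up (L : CRL) (Atom : Type) (g : filt L Atom -> L) (i : idl L Atom) : L :=
  biginf (fun f : filt L Atom => impl (g f) (cI f i)).

Definition down (L : CRL) (Atom : Type) (u : idl L Atom -> L) (f : filt L Atom) : L :=
  biginf (fun i : idl L Atom => impl (u i) (cI f i)).

Definition is_formal_concept (L : CRL) (Atom : Type)
    (g : filt L Atom -> L) (u : idl L Atom -> L) : Prop :=
  (forall i, up g i = u i) /\ (forall f, g f = down u f).

Definition Vext (L : CRL) (Atom : Type) (p : Atom) : filt L Atom -> L :=
  fun f => f (FVar p).
Definition Vint (L : CRL) (Atom : Type) (p : Atom) : idl L Atom -> L :=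
  fun i => i (FVar p).

(* The inequalities [[p]] <= ((p))^down and ((p)) <= [[p]]^up both come from
   f(p) (x) i(p) <= I(f, i).  For the converse ones it suffices to test against
   the crisp principal filter {q | p |- q} and the crisp principal ideal
   {q | q |- p}: their value at p is 1, so (with 1 -> a = a) the relevant meet is
   bounded by I(f_p, i) <= i(p), resp. I(f, i_p) <= f(p), because ideals are
   antitone and filters monotone along |-.  These principal sets are proper since
   an atom is neither refutable nor provable: read Box and Diamond as the identity
   in two-valued logic. *)
From Stdlib Require Import Bool ClassicalEpsilon.

Section ResiduatedLattice.
Context {L : CRL}.
Implicit Types x y : L.

Lemma tens_one_l x : tens one x = x.
Proof.
  apply le_antisym.
  - apply (proj2 (residuation one x x)). rewrite one_impl. apply le_refl.
  - rewrite <- (one_impl (tens one x)).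
    apply (proj1 (residuation one x _)). apply le_refl.
Qed.

Lemma tens_zero_l x : tens zero x = zero.
Proof.
  apply le_antisym; [| apply zero_bot].
  rewrite tens_comm. apply (proj2 (residuation x zero zero)). apply zero_bot.
Qed.

Lemma le_bigsup (I : Type) (F : I -> L) i : le (F i) (bigsup F).
Proof. apply sup_ub. exists i. reflexivity. Qed.

Lemma bigsup_le (I : Type) (F : I -> L) y :
  (forall i, le (F i) y) -> le (bigsup F) y.
Proof. intro HF. apply sup_least. intros x [i <-]. apply HF. Qed.

Lemma biginf_le (I : Type) (F : I -> L) i : le (biginf F) (F i).
Proof. apply inf_lb. exists i. reflexivity. Qed.

Lemma le_biginf (I : Type) (F : I -> L) y :
  (forall i, le y (F i)) -> le y (biginf F).
Proof. intro HF. apply inf_greatest. intros x [i <-]. apply HF. Qed.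

Definition crisp (P : Prop) : L :=
  if excluded_middle_informative P then one else zero.

Lemma crisp_true (P : Prop) : P -> crisp P = one.
Proof. unfold crisp. destruct excluded_middle_informative; tauto. Qed.

Lemma crisp_false (P : Prop) : ~ P -> crisp P = zero.
Proof. unfold crisp. destruct excluded_middle_informative; tauto. Qed.

Lemma crisp_iff (P Q : Prop) : (P <-> Q) -> crisp P = crisp Q.
Proof.
  unfold crisp. intro HPQ.
  do 2 destruct excluded_middle_informative; tauto.
Qed.

Lemma meet_crisp (P Q : Prop) : meet (crisp P) (crisp Q) = crisp (P /\ Q).
Proof.
  unfold crisp.
  do 3 destruct excluded_middle_informative; try tauto;
    apply le_antisym; eauto using meet_lbl, meet_lbr, meet_greatest, le_refl,
      one_top, zero_bot.
Qed.

Lemma tens_crisp_le (P : Prop) x y : (P -> le x y) -> le (tens (crisp P) x) y.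
Proof.
  unfold crisp. destruct excluded_middle_informative as [HP | _]; intro Hxy.
  - rewrite tens_one_l. auto.
  - rewrite tens_zero_l. apply zero_bot.
Qed.

End ResiduatedLattice.

Section TwoValuedSemantics.
Variable Atom : Type.

Fixpoint ev (v : Atom -> bool) (p : fm Atom) : bool :=
  match p with
  | FBot => false
  | FTop => true
  | FVar a => v a
  | FAnd x y => ev v x && ev v y
  | FOr x y => ev v x || ev v y
  | FBox x => ev v x
  | FDia x => ev v x
  end.

Lemma ev_subst v s p : ev v (fsubst s p) = ev (fun a => ev v (s a)) p.
Proof. induction p; simpl; congruence. Qed.

Lemma der_sound {p q} : der p q -> forall v, ev v p = true -> ev v q = true.
Proof.
  induction 1; intros v; simpl; rewrite ?ev_subst, ?andb_true_iff, ?orb_true_iff;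
    intuition (try discriminate; eauto).
Qed.

Lemma not_der_var_bot (a : Atom) : ~ der (FVar a) FBot.
Proof. intro Hder. discriminate (der_sound Hder (fun _ => true) eq_refl). Qed.

Lemma not_der_top_var (a : Atom) : ~ der FTop (FVar a).
Proof. intro Hder. discriminate (der_sound Hder (fun _ => false) eq_refl). Qed.

End TwoValuedSemantics.

Section CanonicalFrame.
Variables (L : CRL) (Atom : Type).
Implicit Types (p q : fm Atom) (f : filt L Atom) (i : idl L Atom).

Lemma filter_mono f p q : der p q -> le (f p) (f q).
Proof.
  intro Hpq. destruct (fval_filter f) as [Hresp [_ [_ Hand]]].
  rewrite (Hresp p (FAnd p q)), Hand by (split; auto using d_andI, d_id, d_andl).
  apply meet_lbr.
Qed.

Lemma ideal_anti i p q : der p q -> le (i q) (i p).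
Proof.
  intro Hpq. destruct (ival_ideal i) as [Hresp [_ [_ Hor]]].
  rewrite (Hresp q (FOr p q)), Hor by (split; auto using d_orE, d_id, d_orr).
  apply meet_lbl.
Qed.

Lemma tens_le_cI f i p : le (tens (f p) (i p)) (cI f i).
Proof. apply (le_bigsup _ (fun q => tens (f q) (i q))). Qed.

Definition principal_filter p : fm Atom -> L := fun q => crisp (der p q).

Definition principal_ideal p : fm Atom -> L := fun q => crisp (der q p).

Lemma principal_filter_is_filter {p} : ~ der p FBot -> is_filter (principal_filter p).
Proof.
  unfold principal_filter. intro Hp. split; [| split; [| split]].
  - intros q r [Hqr Hrq]. apply crisp_iff. split; eauto using d_cut.
  - apply crisp_true, d_top.
  - apply crisp_false, Hp.
  - intros q r. rewrite meet_crisp. apply crisp_iff.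
    split; [intro Hqr; split | intros [Hq Hr]]; eauto using d_cut, d_andl, d_andr, d_andI.
Qed.

Lemma principal_ideal_is_ideal {p} : ~ der FTop p -> is_ideal (principal_ideal p).
Proof.
  unfold principal_ideal. intro Hp. split; [| split; [| split]].
  - intros q r [Hqr Hrq]. apply crisp_iff. split; eauto using d_cut.
  - apply crisp_true, d_bot.
  - apply crisp_false, Hp.
  - intros q r. rewrite meet_crisp. apply crisp_iff.
    split; [intro Hqr; split | intros [Hq Hr]]; eauto using d_cut, d_orl, d_orr, d_orE.
Qed.

Lemma up_formula p : ~ der p FBot -> forall i, up (fun f => f p) i = i p.
Proof.
  intros Hp i. apply le_antisym.
  - set (fp := Filt (principal_filter_is_filter Hp)).
    eapply le_trans; [apply (biginf_le _ (fun f => impl (f p) (cI f i)) fp) |].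
    simpl. unfold principal_filter. rewrite crisp_true, one_impl by apply d_id.
    apply bigsup_le. intro q. apply tens_crisp_le, ideal_anti.
  - apply le_biginf. intro f. apply (proj1 (residuation _ _ _)), tens_le_cI.
Qed.

Lemma down_formula p : ~ der FTop p -> forall f, f p = down (fun i => i p) f.
Proof.
  intros Hp f. apply le_antisym.
  - apply le_biginf. intro i. apply (proj1 (residuation _ _ _)).
    rewrite tens_comm. apply tens_le_cI.
  - set (ip := Idl (principal_ideal_is_ideal Hp)).
    eapply le_trans; [apply (biginf_le _ (fun i => impl (i p) (cI f i)) ip) |].
    simpl. unfold principal_ideal. rewrite crisp_true, one_impl by apply d_id.
    apply bigsup_le. intro q. rewrite tens_comm. apply tens_crisp_le, filter_mono.
Qed.

Lemma formula_is_formal_concept p :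
  ~ der p FBot -> ~ der FTop p ->
  is_formal_concept (fun f : filt L Atom => f p) (fun i => i p).
Proof. intros Hbot Htop. split; [apply up_formula | apply down_formula]; assumption. Qed.

End CanonicalFrame.

Theorem mainTheorem1 (L : CRL) (Atom : Type) :
  forall p : Atom, is_formal_concept (@Vext L Atom p) (@Vint L Atom p).
Proof.
  intro p. apply formula_is_formal_concept.
  - apply not_der_var_bot.
  - apply not_der_top_var.
Qed.
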